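(* Let $M$ be a matroid of rank $n$ on $[d]$. Then, as subsets of $\mathbb{C}^{nd}$, \[ V_{\mathcal{C}(M)} \;=\; V_M \;\cup \bigcup_{N\in \min(M)} V_{\mathcal{C}(N)} . \]
   Context: A matroid $N$ on $[d]=\{1,\dots,d\}$ is determined by its family $\mathcal{D}(N)$ of dependent sets; $\mathcal{C}(N)$ denotes its circuits (minimal dependent sets). Dependency order: for matroids $N_1,N_2$ on $[d]$, $N_1\le N_2$ iff $\mathcal{D}(N_1)\subseteq\mathcal{D}(N_2)$, and $N_1<N_2$ iff moreover $N_1\ne N_2$. For a matroid $M$ on $[d]$, $\min(M)$ denotes the set of minimal elements (for the dependency order) of the set of all matroids $N$ on $[d]$ with $N>M$ (every such $N$ has rank at most $n$). For a matroid $N$ on $[d]$ of rank at most $n$: a realization of $N$ is a tuple $\gamma=(\gamma_1,\dots,\gamma_d)\in(\mathbb{C}^n)^d\cong\mathbb{C}^{nd}$ such that for every $S\subseteq[d]$ the family $(\gamma_s)_{s\in S}$ is linearly dependent iff $S\in\mathcal{D}(N)$; $\Gamma_N$ is the set of realizations and the matroid variety $V_N$ is the Zariski closure of $\Gamma_N$ in $\mathbb{C}^{nd}$. The circuit variety $V_{\mathcal{C}(N)}$ is the set of all $\gamma\in(\mathbb{C}^n)^d$ such that $(\gamma_s)_{s\in S}$ is linearly dependent for every $S\in\mathcal{D}(N)$. *)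

From HB Require Import structures.
From mathcomp Require Import all_boot all_order all_algebra.
From mathcomp Require Import Rstruct.
From mathcomp Require Import complex.
From mathcomp Require Import mpoly.
From Stdlib Require Import Rdefinitions.
Set Implicit Arguments. Unset Strict Implicit. Unset Printing Implicit Defensive.
Import GRing.Theory.

Definition CC : closedFieldType := (Rdefinitions.R)[i].

(* D is the family of dependent sets of a matroid on 'I_d: its complement
   (the independent sets) satisfies the independence axioms. *)
Definition is_matroid (d : nat) (D : {set {set 'I_d}}) : Prop :=
  [/\ set0 \notin D,
      (forall A B : {set 'I_d}, A \subset B -> A \in D -> B \in D) &
      (forall A B : {set 'I_d}, A \notin D -> B \notin D -> #|A| < #|B| ->
         exists2 x, x \in B :\: A & x |: A \notin D)].

Definition mrank (d : nat) (D : {set {set 'I_d}}) : nat :=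
  \max_(A : {set 'I_d} | A \notin D) #|A|.

Definition circuits (d : nat) (D : {set {set 'I_d}}) : {set {set 'I_d}} :=
  [set C in D | [forall B : {set 'I_d}, (B \proper C) ==> (B \notin D)]].

Definition dep_lt (d : nat) (D1 D2 : {set {set 'I_d}}) : Prop :=
  D1 \proper D2.

Definition in_min (d : nat) (M N : {set {set 'I_d}}) : Prop :=
  [/\ is_matroid N, dep_lt M N &
      ~ (exists N', [/\ is_matroid N', dep_lt M N' & dep_lt N' N])].

Local Open Scope ring_scope.

(* A point of (C^n)^d: an n x d matrix whose s-th column is gamma_s. *)
Definition config (n d : nat) := 'M[CC]_(n, d).

Definition lin_dep (n d : nat) (g : config n d) (S : {set 'I_d}) : Prop :=
  exists c : 'I_d -> CC,
    (exists2 s, s \in S & c s != 0) /\ \sum_(s in S) c s *: col s g = 0.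

Definition realizations (n d : nat) (D : {set {set 'I_d}}) (g : config n d)
  : Prop :=
  forall S : {set 'I_d}, lin_dep g S <-> S \in D.

Definition peval (n d : nat) (p : {mpoly CC[n * d]}) (g : config n d) : CC :=
  p.@[fun k => mxvec g 0 k].

Definition zariski_closure (n d : nat) (X : config n d -> Prop)
  (g : config n d) : Prop :=
  forall p : {mpoly CC[n * d]},
    (forall h, X h -> peval p h = 0) -> peval p g = 0.

Definition matroid_variety (n d : nat) (D : {set {set 'I_d}}) :
  config n d -> Prop := zariski_closure (@realizations n d D).

Definition circuit_variety (n d : nat) (D : {set {set 'I_d}})
  (g : config n d) : Prop :=
  forall S, S \in D -> lin_dep g S.

From HB Require Import structures.
From mathcomp Require Import all_boot all_order all_algebra.
From mathcomp Require Import mpoly.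
From Stdlib Require Import Classical.
Set Implicit Arguments. Unset Strict Implicit. Unset Printing Implicit Defensive.
Import GRing.Theory.
Local Open Scope ring_scope.

(* A configuration g realizes the matroid of its own linear
   dependencies.  If g lies in V_C(M), that matroid contains M: either it
   equals M, so that g is a realization of M, or it lies strictly above M and
   hence above some N in min(M), whose circuit variety then contains g.
   Conversely, V_C(N) is contained in V_C(M) for N > M, and V_M in V_C(M)
   because independence of the vectors indexed by S is witnessed by a nonzero
   maximal minor, a polynomial vanishing on every realization of M. *)

(* The vectors gamma_s, s in S, as the rows of a matrix, so that their span
   is the row space of mxalgebra. *)
Definition colset_mx (R : Type) (n d : nat) (A : 'M[R]_(n, d))
    (S : {set 'I_d}) : 'M[R]_(#|S|, n) :=
  rowsub (fun i : 'I_#|S| => enum_val i) A^T.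

Lemma map_colset_mx (R R' : Type) (f : R -> R') n d (A : 'M[R]_(n, d))
    (S : {set 'I_d}) :
  map_mx f (colset_mx A S) = colset_mx (map_mx f A) S.
Proof. by rewrite /colset_mx map_mxsub map_trmx. Qed.

Lemma mulmx_colset_mx (R : pzSemiRingType) n d (A : 'M[R]_(n, d))
    (S : {set 'I_d}) (u : 'rV_#|S|) :
  u *m colset_mx A S = \sum_i u 0 i *: row (enum_val i) A^T.
Proof. by rewrite mulmx_sum_row; apply: eq_bigr => i _; rewrite row_rowsub. Qed.

Section ColumnSubsets.
Variables (F : fieldType) (n d : nat) (A : 'M[F]_(n, d)).
Implicit Types S T : {set 'I_d}.

Lemma row_colset_mx_sub S s : s \in S -> (row s A^T <= colset_mx A S)%MS.
Proof. by move=> sS; rewrite -(enum_rankK_in sS sS) -row_rowsub row_sub. Qed.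

Lemma colset_mx_subP S m (B : 'M_(m, n)) :
  reflect {in S, forall s, (row s A^T <= B)%MS} (colset_mx A S <= B)%MS.
Proof.
apply: (iffP row_subP) => [sub s sS | sub i].
  by rewrite -(enum_rankK_in sS sS) -row_rowsub sub.
by rewrite row_rowsub sub ?enum_valP.
Qed.

Lemma colset_mxS S T : S \subset T -> (colset_mx A S <= colset_mx A T)%MS.
Proof.
by move=> ST; apply/colset_mx_subP => s /(subsetP ST); apply: row_colset_mx_sub.
Qed.

Lemma row_free_colset_mxS S T :
  S \subset T -> row_free (colset_mx A T) -> row_free (colset_mx A S).
Proof.
move=> ST /eqP rankT; rewrite /row_free eqn_leq rank_leq_row /=.
have sub : (colset_mx A T <= colset_mx A S + colset_mx A (T :\: S))%MS.
  apply/colset_mx_subP => t tT; case tS: (t \in S).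
    by apply: submx_trans (addsmxSl _ _); apply: row_colset_mx_sub.
  apply: submx_trans (addsmxSr _ _).
  by apply: row_colset_mx_sub; rewrite inE tS.
have := leq_trans (mxrankS sub) (mxrank_adds_leqif _ _).
have := rank_leq_row (colset_mx A (T :\: S)).
rewrite rankT -(cardsID S T) (setIidPr ST) => leTS le_card_rank.
rewrite -(leq_add2r #|T :\: S|); apply: leq_trans le_card_rank _.
by rewrite leq_add2l.
Qed.

Lemma row_sub_colset_mx S x :
    row_free (colset_mx A S) -> ~~ row_free (colset_mx A (x |: S)) ->
  (row x A^T <= colset_mx A S)%MS.
Proof.
move=> /eqP rankS depxS.
have sub := colset_mxS (subsetUr [set x] S).
have : (\rank (colset_mx A (x |: S)) <= \rank (colset_mx A S))%N.
  rewrite rankS -ltnS (leq_trans (_ : _ < #|x |: S|)%N) //.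
    by rewrite ltn_neqAle depxS rank_leq_row.
  by rewrite cardsU1 -add1n leq_add2r leq_b1.
rewrite (geq_leqif (mxrank_leqif_sup sub)).
exact: submx_trans (row_colset_mx_sub (setU11 x S)).
Qed.

Definition dep_sets : {set {set 'I_d}} :=
  [set S | ~~ row_free (colset_mx A S)].

Lemma dep_sets_matroid : is_matroid dep_sets.
Proof.
split.
- rewrite inE negbK /row_free eqn_leq rank_leq_row.
  by apply: (@leq_trans 0); rewrite ?cards0.
- move=> S T ST; rewrite !inE; apply: contra; exact: row_free_colset_mxS.
move=> S T depS depT ltST.
have [/exists_inP [x xTS indep] | /exists_inPn noaug] :=
  boolP [exists x in T :\: S, x |: S \notin dep_sets]; first by exists x.
move: depS depT; rewrite !inE !negbK => freeS freeT.
have : (colset_mx A T <= colset_mx A S)%MS.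
  apply/colset_mx_subP => x xT.
  case xS: (x \in S); first exact: row_colset_mx_sub.
  apply: row_sub_colset_mx freeS _.
  by have := noaug x; rewrite !inE xS xT negbK; apply.
by move/mxrankS; rewrite (eqP freeT) (eqP freeS) leqNgt ltST.
Qed.

End ColumnSubsets.

Lemma trmx_sum_cols n d (g : config n d) S (c : 'I_d -> CC) :
  (\sum_(s in S) c s *: col s g)^T =
  \sum_(i < #|S|) c (enum_val i) *: row (enum_val i) g^T.
Proof.
rewrite linear_sum big_enum_val.
by apply: eq_bigr => i _; rewrite linearZ /= tr_col.
Qed.

Lemma lin_depE n d (g : config n d) S :
  lin_dep g S <-> exists2 u : 'rV_#|S|, u != 0 & u *m colset_mx g S = 0.
Proof.
split=> [[c [[s sS cs] sum0]] | [u /rV0Pn [i ui] uM0]].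
  exists (\row_i c (enum_val i)).
    by apply/rV0Pn; exists (enum_rank_in sS s); rewrite mxE enum_rankK_in.
  rewrite mulmx_colset_mx -[RHS]trmx0 -sum0 trmx_sum_cols.
  by apply: eq_bigr => i _; rewrite mxE.
exists (fun s => u 0 (enum_rank_in (enum_valP i) s)); split.
  by exists (enum_val i); rewrite ?enum_valP ?enum_valK_in.
apply: trmx_inj; rewrite trmx_sum_cols trmx0 -[RHS]uM0 mulmx_colset_mx.
by apply: eq_bigr => j _; rewrite enum_valK_in.
Qed.

Lemma dep_sets_realization n d (g : config n d) : realizations (dep_sets g) g.
Proof.
move=> S; rewrite lin_depE inE -kermx_eq0; split=> [[u u0 uM0] | ].
  by apply/rowV0Pn; exists u => //; apply/sub_kermxP.
by case/rowV0Pn => u /sub_kermxP uM0 u0; exists u.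
Qed.

Definition generic_config n d : 'M[{mpoly CC[n * d]}]_(n, d) :=
  \matrix_(i, j) 'X_(mxvec_index i j).

Lemma eval_generic_config n d (g : config n d) :
  map_mx (meval (fun k => mxvec g 0 k)) (generic_config n d) = g.
Proof. by apply/matrixP => i j; rewrite !mxE mevalXU mxvecE. Qed.

Definition minor_poly n d (S : {set 'I_d}) (B : 'M[CC]_(n, #|S|)) :
    {mpoly CC[n * d]} :=
  \det (colset_mx (generic_config n d) S *m map_mx (fun c => c%:MP) B).
Arguments minor_poly {n d} S B.

Lemma peval_minor_poly n d (g : config n d) (S : {set 'I_d})
    (B : 'M[CC]_(n, #|S|)) :
  peval (minor_poly S B) g = \det (colset_mx g S *m B).
Proof.
rewrite /peval /minor_poly -det_map_mx map_mxM map_colset_mx.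
rewrite eval_generic_config.
by congr (\det (_ *m _)); apply/matrixP => i j; rewrite !mxE /= mevalC.
Qed.

Lemma matroid_variety_sub_circuit_variety n d (D : {set {set 'I_d}})
    (g : config n d) :
  matroid_variety D g -> circuit_variety D g.
Proof.
move=> Vg S SD; apply/(dep_sets_realization g S); rewrite inE.
apply/negP => /row_freeP [B BK].
have : peval (minor_poly S B) g = 0.
  apply: Vg => h real_h; rewrite peval_minor_poly.
  have [u u0 uM0] := (lin_depE h S).1 ((real_h S).2 SD).
  by apply/eqP/det0P; exists u; rewrite // mulmxA uM0 mul0mx.
by rewrite peval_minor_poly BK det1 => /eqP; rewrite oner_eq0.
Qed.

Lemma circuit_varietyS n d (D1 D2 : {set {set 'I_d}}) (g : config n d) :
  D1 \subset D2 -> circuit_variety D2 g -> circuit_variety D1 g.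
Proof. by move=> D12 VD2 S /(subsetP D12)/VD2. Qed.

Lemma in_min_below d (M N : {set {set 'I_d}}) :
  is_matroid N -> M \proper N -> exists2 N0, in_min M N0 & N0 \subset N.
Proof.
have [k] := ubnP #|N|; elim: k N => // k IH N cardN matN MN.
have [[N' [matN' MN' N'N]] | no_between] :=
  classic (exists N', [/\ is_matroid N', dep_lt M N' & dep_lt N' N]).
  have [N0 minN0 N0N'] := IH N' (leq_trans (proper_card N'N) cardN) matN' MN'.
  by exists N0; last exact: subset_trans N0N' (proper_sub N'N).
by exists N.
Qed.

Theorem mainTheorem1 (n d : nat) (M : {set {set 'I_d}}) :
  is_matroid M -> mrank M = n ->
  forall g : config n d,
    circuit_variety M g <->
    (matroid_variety M g \/
     exists N : {set {set 'I_d}}, in_min M N /\ circuit_variety N g).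
Proof.
move=> _ _ g; split=> [VM | [VM | [N [[_ MN _] VN]]]].
- have leMD : M \subset dep_sets g.
    by apply/subsetP => S /VM /(dep_sets_realization g S).
  have [<- | neqMD] := eqVneq (dep_sets g) M.
    by left => p; apply; apply: dep_sets_realization.
  have ltMD : M \proper dep_sets g by rewrite properEneq eq_sym neqMD leMD.
  have [N minN ND] := in_min_below (dep_sets_matroid g) ltMD.
  right; exists N; split => // S /(subsetP ND).
  exact: (dep_sets_realization g S).2.
- exact: matroid_variety_sub_circuit_variety.
- exact: circuit_varietyS (proper_sub MN) VN.
Qed.
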